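(* Let $p\geq 1$ and $0\leq k<p$ be integers and let $\sigma=\mathrm{ReLU}^p$. For each $N\geq 1$, let $w_1,\dots,w_N\in\{1,-1\}$ and let $\mathbf{b}=(b_1,\dots,b_N)\in\mathbb{R}^N$ be quasi-evenly spaced on $[-1,1]$, i.e. $b_n=-1+2(n-1)/N+o(N^{-1})$ for $n=1,\dots,N$ (uniformly in $n$ as $N\to\infty$). Let $\mathbf{G}^{(k)}_\sigma\in\mathbb{R}^{N\times N}$ be the matrix with entries $$[\mathbf{G}^{(k)}_\sigma]_{i,j}=\int_{-1}^1 w_i^k w_j^k\,\sigma^{(k)}(w_ix-b_i)\,\sigma^{(k)}(w_jx-b_j)\,dx,\qquad i,j=1,\dots,N,$$ with eigenvalues $\lambda^{(k)}_1\geq\cdots\geq\lambda^{(k)}_N\geq 0$, and let $\kappa(\mathbf{G}^{(k)}_\sigma)=\lambda^{(k)}_1/\lambda^{(k)}_N$. Then $\kappa(\mathbf{G}^{(k)}_\sigma)=\Omega(N^{1+2(p-k)})$ as $N\to\infty$; that is, there exists a constant $C>0$ such that $\kappa(\mathbf{G}^{(k)}_\sigma)\geq C N^{1+2(p-k)}$ for all sufficiently large $N$.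
   Context: $\mathrm{ReLU}^p(z)=(\max\{0,z\})^p$ and $\sigma^{(k)}$ denotes the $k$-th derivative of $\sigma$ (so $\sigma^{(k)}(z)=\frac{p!}{(p-k)!}\mathrm{ReLU}^{p-k}(z)$ for $k<p$). *)

From HB Require Import structures.
From mathcomp Require Import all_boot all_order all_algebra.
From mathcomp Require Import all_classical all_reals all_analysis.
Set Implicit Arguments. Unset Strict Implicit. Unset Printing Implicit Defensive.
Import Order.TTheory GRing.Theory Num.Theory.
Import numFieldNormedType.Exports.
Local Open Scope classical_set_scope.
Local Open Scope ring_scope.

Section Defs.
Variable R : realType.

Definition reluP (p : nat) (z : R) : R := (Num.max 0 z) ^+ p.

(* k-th derivative of sigma = ReLU^p, for k < p:
   sigma^(k)(z) = p!/(p-k)! * ReLU^(p-k)(z)  (formula from the context). *)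
Definition dsigma (p k : nat) (z : R) : R :=
  (p`!%:R / (p - k)`!%:R) * reluP (p - k) z.

Definition gram (p k N : nat) (w b : 'I_N -> R) : 'M[R]_N :=
  \matrix_(i < N, j < N)
    \int[lebesgue_measure]_(x in `[-1, 1]%classic)
      (w i ^+ k * w j ^+ k * dsigma p k (w i * x - b i) * dsigma p k (w j * x - b j)).

Definition lambda_max (N : nat) (A : 'M[R]_N) : R := sup [set a : R | eigenvalue A a].
Definition lambda_min (N : nat) (A : 'M[R]_N) : R := inf [set a : R | eigenvalue A a].

Definition cond_number (N : nat) (A : 'M[R]_N) : \bar R :=
  if lambda_min A == 0 then +oo%E else (lambda_max A / lambda_min A)%:E.

End Defs.

(* lambda_max is at least every diagonal entry of the Gram matrix, and the neuron whose bias
   is close to -1 is active on half of [-1, 1]; hence lambda_max >= const.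
   For lambda_min, take the 2(p-k)+3 neurons whose biases lie in a window of width O(1/N)
   around 0.  Outside the window each of their truncated powers ReLU^(p-k)(+-x - b_i) is
   either 0 or the polynomial (|x| - b_i)^(p-k), so a nonzero combination annihilating the
   first p-k+1 moments of the biases of each sign class vanishes there, while inside it is
   O(N^-(p-k)).  Its Rayleigh quotient is thus O(N^-(1+2(p-k))), and some eigenvalue is
   below it by the spectral theorem, applied over R[i]. *)

From HB Require Import structures.
From mathcomp Require Import all_boot all_order all_algebra.
From mathcomp Require Import all_classical all_reals all_analysis.
From mathcomp Require Import measurable_realfun complex.
From mathcomp Require Import ring lra zify.
Set Implicit Arguments.
Unset Strict Implicit.
Unset Printing Implicit Defensive.

Import Order.TTheory GRing.Theory Num.Theory.
Import numFieldNormedType.Exports.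
Local Open Scope classical_set_scope.
Local Open Scope ring_scope.

Lemma rV_neq0P (R : nmodType) n (u : 'rV[R]_n) : u != 0 -> exists i, u 0 i != 0.
Proof.
move=> u0; apply/existsP; apply: contraNT u0 => /existsPn u0.
by apply/eqP/rowP => i; rewrite mxE; apply/eqP/negPn/u0.
Qed.

Lemma mulmx_trmx_gt0 (R : realDomainType) n (u : 'rV[R]_n) : u != 0 -> 0 < (u *m u^T) 0 0.
Proof.
case/rV_neq0P => i ui0; rewrite mxE (bigD1 i) //= !mxE ltr_pwDl ?sumr_ge0 //.
  by rewrite lt0r mulf_neq0 //= -expr2 sqr_ge0.
by move=> j _; rewrite !mxE -expr2 sqr_ge0.
Qed.

Lemma mx_neq0P (R : nmodType) m n (A : 'M[R]_(m, n)) : A != 0 -> exists i j, A i j != 0.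
Proof.
move=> A0; have /existsP[i /existsP[j Aij]] : [exists i, exists j, A i j != 0].
  apply: contraNT A0 => /existsPn A0; apply/eqP/matrixP => i j; rewrite mxE.
  by apply/eqP; move/existsPn: (A0 i) => /(_ j)/negPn.
by exists i, j.
Qed.

Lemma left_kernel_neq0 (F : fieldType) m n (A : 'M[F]_(m, n)) : (n < m)%N ->
  exists2 v : 'rV_m, v != 0 & v *m A = 0.
Proof.
move=> lt_nm; have : kermx A != 0.
  by rewrite -mxrank_eq0 mxrank_ker subn_eq0 -ltnNge (leq_ltn_trans (rank_leq_col A)).
case/mx_neq0P => i [j kij]; exists (row i (kermx A)); last by rewrite -row_mul mulmx_ker row0.
by apply: contraNneq kij => /rowP/(_ j); rewrite !mxE => ->.
Qed.

Section Eigenvalues.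
Variable R : realFieldType.

Lemma exists_sup_normalizer n (g : 'I_n -> R) i0 : g i0 != 0 ->
  exists t : R, (exists i, `|t * g i| = 1) /\ forall i, `|t * g i| <= 1.
Proof.
move=> gi0; have [i1 _ gmax] := @arg_maxP _ _ _ i0 xpredT (fun i => `|g i|) isT.
have g1_gt0 : 0 < `|g i1| by rewrite (lt_le_trans _ (gmax i0 isT)) ?normr_gt0.
exists `|g i1|^-1; split; first by exists i1; rewrite normrM normfV normr_id mulVf ?gt_eqF.
by move=> i; rewrite normrM normfV normr_id ler_pdivrMl // mulr1; exact: gmax.
Qed.

Lemma psd_eigenvalue_ge0 n (A : 'M[R]_n) a :
  (forall u : 'rV_n, 0 <= (u *m A *m u^T) 0 0) -> eigenvalue A a -> 0 <= a.
Proof.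
move=> psdA /eigenvalueP [v vA v0].
have := psdA v; rewrite vA -scalemxAl mxE.
by rewrite pmulr_lge0 // mulmx_trmx_gt0.
Qed.

Lemma eigenvalue_norm_le n (A : 'M[R]_n) a :
  eigenvalue A a -> `|a| <= \sum_i \sum_j `|A i j|.
Proof.
case/eigenvalueP => v vA /rV_neq0P [i0 vi0].
have [i _ vmax] := @arg_maxP _ _ _ i0 xpredT (fun i => `|v 0 i|) isT.
have vi_gt0 : 0 < `|v 0 i| by rewrite (lt_le_trans _ (vmax i0 isT)) ?normr_gt0.
have aviE : a * v 0 i = \sum_j v 0 j * A j i.
  by have := congr1 (fun w : 'rV_n => w 0 i) vA; rewrite !mxE => <-.
rewrite -(ler_pM2r vi_gt0) -normrM aviE mulr_suml.
apply: le_trans (ler_norm_sum _ _ _) _; apply: ler_sum => j _.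
rewrite normrM mulrC ler_pM ?normr_ge0 //; last exact: vmax.
by rewrite (bigD1 i) //= lerDl sumr_ge0.
Qed.
End Eigenvalues.

Section SymmetricSpectral.
Variable R : rcfType.
Local Notation toC := (real_complex R).

Lemma real_complex_real (x : R) : toC x \is Num.real.
Proof. by rewrite realE !lecR orbC le_total. Qed.

Lemma symmetric_complex_diag n (G : 'M[R]_n) : G^T = G ->
  exists2 P : 'M[R[i]]_n, P \is unitarymx &
    exists r : 'I_n -> R, map_mx toC G = invmx P *m diag_mx (\row_i toC (r i)) *m P.
Proof.
move=> symG; set Gc := map_mx toC G.
have hermGc : Gc \is hermsymmx.
  apply: realsym_hermsym; last by apply/mxOverP => i j; rewrite mxE real_complex_real.
  apply/is_hermitianmxP; rewrite expr0 scale1r map_mx_id //.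
  by rewrite map_trmx symG.
exists (spectralmx Gc); first exact: spectral_unitarymx.
exists (fun i => complex.Re (spectral_diag Gc 0 i)).
have -> : \row_i toC (complex.Re (spectral_diag Gc 0 i)) = spectral_diag Gc.
  apply/rowP => i; rewrite mxE RRe_real //.
  by have /mxOverP := hermitian_spectral_diag_real hermGc; apply.
exact/orthomx_spectralP/hermitian_normalmx.
Qed.

Lemma symmetric_quadratic_form_decomposition n (G : 'M[R]_n) : G^T = G ->
  exists2 r : 'I_n -> R, (forall i, eigenvalue G (r i)) &
  forall u : 'rV_n, exists2 s : 'I_n -> R, (forall i, 0 <= s i) &
    (u *m G *m u^T) 0 0 = \sum_i r i * s i /\ (u *m u^T) 0 0 = \sum_i s i.
Proof.
move=> symG; have [P P_unitary [r GE]] := symmetric_complex_diag symG.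
have Pu := unitarymx_unit P_unitary; have PV := invmx_unitary P_unitary.
exists r => [i|u].
  rewrite -(eigenvalue_map toC) /=; apply/eigenvalueP; exists (delta_mx 0 i *m P).
    rewrite GE !mulmxA -(mulmxA _ P) mulmxV // mulmx1.
    by rewrite -[delta_mx 0 i *m diag_mx _]rowE row_diag_mx scalemxAl mxE.
  rewrite mulmx_free_eq0 ?row_free_unit //; apply/negP => /eqP/matrixP/(_ 0 i).
  by rewrite !mxE !eqxx => /eqP; rewrite oner_eq0.
pose uc := map_mx toC u; pose y := uc *m invmx P.
(* s i = |y_i|^2 is the weight of u on the i-th eigenvector. *)
pose s i := complex.Re (y 0 i) ^+ 2 + complex.Im (y 0 i) ^+ 2.
have sE i : toC (s i) = y 0 i * (y 0 i)^* by rewrite add_Re2_Im2 normCK.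
have PuE i : (P *m uc^T) i 0 = (y 0 i)^*.
  rewrite /y PV !mxE rmorph_sum; apply: eq_bigr => j _.
  rewrite !mxE rmorphM; have ar := real_complex_real (u 0 j); set a := toC _ in ar *.
  by rewrite /= conjCK conj_Creal // mulrC.
exists s => [i|]; first by rewrite addr_ge0 ?sqr_ge0.
have toC_inj : injective toC := fmorph_inj _.
split; apply: toC_inj; rewrite rmorph_sum.
- have -> : toC ((u *m G *m u^T) 0 0) = (uc *m map_mx toC G *m uc^T) 0 0.
    by rewrite /uc map_trmx -!map_mxM [RHS]mxE.
  rewrite GE !mulmxA -(mulmxA _ P) -/y -mulmxA mxE; apply: eq_bigr => i _.
  by rewrite mul_diag_mx mxE PuE mulrCA -sE rmorphM mxE.
- have -> : toC ((u *m u^T) 0 0) = (uc *m uc^T) 0 0.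
    by rewrite /uc map_trmx -map_mxM [RHS]mxE.
  rewrite -[uc in uc *m _](mulmx1 uc) -(mulVmx Pu) mulmxA -/y -mulmxA mxE.
  by apply: eq_bigr => i _; rewrite PuE -sE.
Qed.

Lemma symmetric_eigenvalue_le_rayleigh n (G : 'M[R]_n) (u : 'rV_n) : G^T = G -> u != 0 ->
  exists2 a, eigenvalue G a & a * (u *m u^T) 0 0 <= (u *m G *m u^T) 0 0.
Proof.
move=> symG /rV_neq0P[i0 _].
have [r eig_r /(_ u)[s s_ge0 [-> ->]]] := symmetric_quadratic_form_decomposition symG.
have [i _ rmin] := @arg_minP _ _ _ i0 xpredT r isT.
exists (r i) => //; rewrite mulr_sumr; apply: ler_sum => j _.
by rewrite ler_wpM2r //; exact: rmin.
Qed.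

Lemma symmetric_eigenvalue_ge_rayleigh n (G : 'M[R]_n) (u : 'rV_n) : G^T = G -> u != 0 ->
  exists2 a, eigenvalue G a & (u *m G *m u^T) 0 0 <= a * (u *m u^T) 0 0.
Proof.
move=> symG /rV_neq0P[i0 _].
have [r eig_r /(_ u)[s s_ge0 [-> ->]]] := symmetric_quadratic_form_decomposition symG.
have [i _ rmax] := @arg_maxP _ _ _ i0 xpredT r isT.
exists (r i) => //; rewrite mulr_sumr; apply: ler_sum => j _.
by rewrite ler_wpM2r //; exact: rmax.
Qed.

Lemma symmetric_eigenvalue_ge_diag n (G : 'M[R]_n) i : G^T = G ->
  exists2 a, eigenvalue G a & G i i <= a.
Proof.
move=> symG; have e_neq0 : delta_mx 0 i != 0 :> 'rV[R]_n.
  by apply/negP => /eqP/matrixP/(_ 0 i); rewrite !mxE !eqxx => /eqP; rewrite oner_eq0.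
have [a eig_a] := symmetric_eigenvalue_ge_rayleigh symG e_neq0.
by rewrite trmx_delta -!rowE -!colE !mxE eqxx mulr1; exists a.
Qed.

End SymmetricSpectral.

Lemma cond_number_ge (R : realType) n (A : 'M[R]_n) (c a1 a2 : R) :
  (forall u : 'rV_n, 0 <= (u *m A *m u^T) 0 0) ->
  eigenvalue A a1 -> eigenvalue A a2 -> 0 <= c -> c * a2 <= a1 ->
  (c%:E <= cond_number A)%E.
Proof.
move=> psdA eig1 eig2 c_ge0 ca.
set S := [set a | eigenvalue A a].
have S_ge0 a : S a -> 0 <= a := psd_eigenvalue_ge0 psdA.
have S_ub a : S a -> a <= \sum_i \sum_j `|A i j|.
  by move/eigenvalue_norm_le; apply: le_trans; rewrite ler_norm.
have inf_ge0 : 0 <= inf S by apply: lb_le_inf; [exists a1 | exact: S_ge0].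
have inf_le : inf S <= a2 by apply: ge_inf => //; exists 0 => a /S_ge0.
have sup_ge : a1 <= sup S.
  by apply: sup_upper_bound => //; split; [exists a1 | exists (\sum_i \sum_j `|A i j|)].
rewrite /cond_number /lambda_min /lambda_max -/S; case: ifPn => [_|inf_neq0]; first by rewrite leey.
have inf_gt0 : 0 < inf S by rewrite lt_def inf_neq0.
rewrite lee_fin ler_pdivlMr // (le_trans _ sup_ge) // (le_trans _ ca) //.
by rewrite ler_wpM2l.
Qed.

Lemma Rintegral_sum d (T : measurableType d) (R : realType)
    (mu : {measure set T -> \bar R}) (D : set T) I (s : seq I) (f : I -> T -> R) :
  measurable D -> (forall i, mu.-integrable D (EFin \o f i)) ->
  \int[mu]_(x in D) (\sum_(i <- s) f i x) = \sum_(i <- s) \int[mu]_(x in D) f i x.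
Proof.
move=> mD intf; rewrite /Rintegral sum_fine; last first.
  by move=> i _; apply: integrable_fin_num => //; exact: intf.
by rewrite -integral_sum //; congr fine; apply: eq_integral => x _; rewrite sumEFin.
Qed.

Section Integrals.
Variable R : realType.
Local Notation mu := (@lebesgue_measure R).

Lemma continuous_integrable_itv (f : R -> R) (a b : R) :
  continuous f -> mu.-integrable `[a, b] (EFin \o f).
Proof.
move=> cf; apply: continuous_compact_integrable; first exact: segment_compact.
exact: continuous_subspaceT.
Qed.

Lemma continuous_sum I (s : seq I) (f : I -> R -> R) :
  (forall i, continuous (f i)) -> continuous (fun x => \sum_(i <- s) f i x).
Proof. by move=> cf; apply: continuous_big => [|i _]; [exact: add_continuous | exact: cf]. Qed.

Lemma continuous_mul (f g : R -> R) :
  continuous f -> continuous g -> continuous (fun x => f x * g x).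
Proof. by move=> cf cg x; apply: (@continuousM R R f g); [exact: cf | exact: cg]. Qed.

Lemma continuous_sqr (f : R -> R) : continuous f -> continuous (fun x => f x ^+ 2).
Proof.
move=> cf x; apply: (@continuous_comp _ _ _ f (fun y => y ^+ 2)); first exact: cf.
exact: exprn_continuous.
Qed.

Lemma continuous_measurable_EFin (g : R -> R) (D : set R) :
  continuous g -> measurable_fun D ((EFin \o g) : R -> \bar R).
Proof.
move=> cg; apply/measurable_EFinP/measurable_funTS.
exact: continuous_measurable_fun.
Qed.

Lemma Rintegral_itv_ge (g : R -> R) (l r a b K : R) :
  continuous g -> (forall x, 0 <= g x) -> l <= a -> a <= b -> b <= r -> 0 <= K ->
  (forall x, a <= x <= b -> K <= g x) ->
  K * (b - a) <= \int[mu]_(x in `[l, r]) g x.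
Proof.
move=> cg g_ge0 la ab br K_ge0 Kg.
rewrite -lee_fin /Rintegral fineK; last exact/integrable_fin_num/continuous_integrable_itv.
apply: (@le_trans _ _ (\int[mu]_(x in `[a, b]) (EFin \o g) x)%E); last first.
  apply: ge0_subset_integral => //; first exact: continuous_measurable_EFin.
    by move=> x _; rewrite lee_fin.
  by move=> x /=; rewrite !in_itv /= => /andP[xa xb]; rewrite (le_trans la) ?(le_trans xb).
apply: (@le_trans _ _ (\int[mu]_(x in `[a, b]) (cst K%:E) x)%E).
  have mab : mu `[a, b] = (b - a)%:E.
    rewrite lebesgue_measure_itv /= lte_fin; case: ltP => [_|ba]; first by rewrite -EFinD.
    by rewrite (_ : b = a) ?subrr //; apply/eqP; rewrite eq_le ab ba.
  by rewrite integral_cst //= mab -EFinM.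
by apply: ge0_le_integral => //; exact: continuous_measurable_EFin.
Qed.

Lemma Rintegral_itv_le (g : R -> R) (l r d B : R) :
  continuous g -> (forall x, 0 <= g x) -> 0 <= d ->
  (forall x, d < `|x| -> g x = 0) -> (forall x, `|x| <= d -> g x <= B) ->
  \int[mu]_(x in `[l, r]) g x <= B * (2 * d).
Proof.
move=> cg g_ge0 d_ge0 g0 gB.
have B_ge0 : 0 <= B by rewrite (le_trans (g_ge0 0)) ?gB ?normr0.
set A := `[- d, d]%classic.
have mA : measurable A := measurable_itv _.
rewrite -lee_fin /Rintegral fineK; last exact/integrable_fin_num/continuous_integrable_itv.
apply: (@le_trans _ _ (\int[mu]_(x in `[l, r]) (B * \1_A x)%:E)%E).
  apply: ge0_le_integral => //.
  - by move=> x _; rewrite lee_fin.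
  - exact: continuous_measurable_EFin.
  - by apply/measurable_EFinP/measurable_funM; [exact: measurable_cst | exact: measurable_indic].
  move=> x _; rewrite lee_fin indicE.
  have [xd|dx] := lerP `|x| d; last by rewrite g0 // mulr_ge0.
  by rewrite mem_set ?mulr1 ?gB // /A /= in_itv /= -ler_norml.
rewrite integralZl_indic // => [|B_lt0]; last by move: B_ge0; rewrite leNgt B_lt0.
rewrite integral_indic // EFinM lee_wpmul2l ?lee_fin //.
apply: (@le_trans _ _ (mu A)); first exact: measureIl.
rewrite /A lebesgue_measure_itv /= lte_fin.
by case: ltP => _; rewrite lee_fin; lra.
Qed.

Definition itv_gram {n} (a b : R) (f : 'I_n -> R -> R) : 'M[R]_n :=
  \matrix_(i, j) \int[mu]_(x in `[a, b]) (f i x * f j x).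

Lemma itv_gram_quad_form a b n (f : 'I_n -> R -> R) (u : 'rV_n) :
  (forall i, continuous (f i)) ->
  (u *m itv_gram a b f *m u^T) 0 0 = \int[mu]_(x in `[a, b]) (\sum_i u 0 i * f i x) ^+ 2.
Proof.
move=> cf; have mI : measurable `[a, b] := measurable_itv _.
have cuf i : continuous (fun x => u 0 i * f i x).
  by apply: continuous_mul; [exact: cst_continuous | exact: cf].
under eq_Rintegral do rewrite expr2 mulr_suml.
rewrite Rintegral_sum //; last first.
  by move=> i; apply/continuous_integrable_itv/continuous_mul/continuous_sum.
rewrite mxE; under eq_bigr do rewrite !mxE mulr_suml.
rewrite exchange_big; apply: eq_bigr => i _ /=.
under eq_Rintegral do rewrite mulr_sumr.
rewrite Rintegral_sum //; last by move=> j; apply/continuous_integrable_itv/continuous_mul.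
apply: eq_bigr => j _; under eq_Rintegral do rewrite mulrACA.
rewrite RintegralZl //; last by apply/continuous_integrable_itv/continuous_mul.
by rewrite !mxE mulrAC.
Qed.

Lemma itv_gram_sym a b n (f : 'I_n -> R -> R) : (itv_gram a b f)^T = itv_gram a b f.
Proof. by apply/matrixP => i j; rewrite !mxE; apply: eq_Rintegral => x _; rewrite mulrC. Qed.

Lemma itv_gram_psd a b n (f : 'I_n -> R -> R) (u : 'rV_n) :
  (forall i, continuous (f i)) -> 0 <= (u *m itv_gram a b f *m u^T) 0 0.
Proof. by move=> cf; rewrite itv_gram_quad_form // Rintegral_ge0 // => x _; exact: sqr_ge0. Qed.

End Integrals.

Lemma sum_shift_pow_eq0 (R : comPzRingType) m I (r : seq I) (c b : I -> R) (x : R) :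
  (forall j : 'I_m.+1, \sum_(i <- r) c i * b i ^+ j = 0) ->
  \sum_(i <- r) c i * (x - b i) ^+ m = 0.
Proof.
move=> mom; under eq_bigr do rewrite exprDn mulr_sumr.
rewrite exchange_big big1 //= => j _.
rewrite -[RHS](mulr0 (x ^+ (m - j) * (-1) ^+ j *+ 'C(m, j))) -[X in _ * X](mom j) mulr_sumr.
apply: eq_bigr => i _; rewrite (exprNn (b i)) mulrnAr mulrnAl; congr (_ *+ _).
by rewrite [LHS](mulrCA (c i)) (mulrCA (c i)) mulrA.
Qed.

Section TruncatedPower.
Variable R : realType.
Implicit Types (m : nat) (z : R).

Lemma reluP_ge0 m z : 0 <= reluP m z.
Proof. by rewrite /reluP exprn_ge0 // le_max lexx. Qed.

Lemma reluP_le_norm m z : reluP m z <= `|z| ^+ m.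
Proof.
rewrite /reluP lerXn2r ?nnegrE ?le_max ?lexx ?normr_ge0 //.
by rewrite ge_max normr_ge0 ler_norm.
Qed.

Lemma reluP_id m z : 0 <= z -> reluP m z = z ^+ m.
Proof. by move=> z_ge0; rewrite /reluP max_r. Qed.

Lemma reluP_eq0 m z : (0 < m)%N -> z <= 0 -> reluP m z = 0.
Proof. by move=> m_gt0 z_le0; rewrite /reluP max_l // expr0n gtn_eqF. Qed.

Lemma reluP_ge m a z : 0 <= a <= z -> a ^+ m <= reluP m z.
Proof.
case/andP=> a_ge0 az; rewrite reluP_id ?(le_trans a_ge0) //.
by rewrite lerXn2r // nnegrE (le_trans a_ge0).
Qed.

Lemma continuous_reluP_affine m (w b : R) : continuous (fun x => reluP m (w * x - b)).
Proof.
move=> x; apply: (@continuous_comp _ _ _ (fun x => Num.max 0 (w * x - b)) (fun y => y ^+ m)).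
  apply: (@continuous_max R R (fun=> 0) (fun x => w * x - b)); first exact: cst_continuous.
  apply: continuousB; last exact: cst_continuous.
  by apply: continuousM; first exact: cst_continuous.
exact: exprn_continuous.
Qed.

Lemma reluP_sgr m (w b x : R) : (0 < m)%N -> w = 1 \/ w = -1 -> `|b| < `|x| ->
  reluP m (w * x - b) = (w == Num.sg x)%:R * (`|x| - b) ^+ m.
Proof.
move=> m_gt0 w1 bx.
have [b_le Nb_le] : b <= `|b| /\ - b <= `|b| by rewrite -[in X in _ /\ X]normrN !ler_norm.
have N1_neq1 : (-1 == 1 :> R) = false by apply/negbTE/eqP => h; lra.
have x_neq0 : x != 0 by apply: contraTneq bx => ->; rewrite normr0 -leNgt.
case: (ltrP x 0) bx => [x_lt0|x_ge0].
  rewrite ltr0_sg // (ltr0_norm x_lt0) => bx.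
  case: w1 => ->; rewrite ?eqxx 1?eq_sym ?N1_neq1 /= ?mul1r ?mul0r.
    by rewrite reluP_eq0 //; lra.
  by rewrite reluP_id mulN1r //; lra.
have x_gt0 : 0 < x by rewrite lt_def x_neq0.
rewrite gtr0_sg // (gtr0_norm x_gt0) => bx.
case: w1 => ->; rewrite ?eqxx ?N1_neq1 /= ?mul1r ?mul0r.
  by rewrite reluP_id //; lra.
by rewrite reluP_eq0 //; lra.
Qed.

Lemma exists_reluP_comb_vanishing m n (w b : 'I_n -> R) (d : R) :
  (0 < m)%N -> (m.+1 + m.+1 < n)%N -> (forall i, w i = 1 \/ w i = -1) ->
  (forall i, `|b i| <= d) ->
  exists beta : 'I_n -> R, [/\ exists i, `|beta i| = 1, forall i, `|beta i| <= 1
    & forall x, d < `|x| -> \sum_i beta i * reluP m (w i * x - b i) = 0].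
Proof.
(* Beyond the biases each term is 0 or beta i * (|x| - b i)^m according as w i differs from
   or equals sg x, so it suffices that beta annihilate the moments b^0, ..., b^m on each sign
   class: 2(m+1) linear conditions on n > 2(m+1) unknowns. *)
move=> m_gt0 mn w1 bd.
have d_ge0 : 0 <= d := le_trans (normr_ge0 _) (bd (Ordinal (leq_ltn_trans (leq0n _) mn))).
pose mom s : 'M[R]_(n, m.+1) := \matrix_(i, j) ((w i == s)%:R * b i ^+ j).
have [g g_neq0 gM] := left_kernel_neq0 (row_mx (mom 1) (mom (-1))) mn.
have gmom s (j : 'I_m.+1) : s = 1 \/ s = -1 -> \sum_i g 0 i * (w i == s)%:R * b i ^+ j = 0.
  move: gM; rewrite mul_mx_row => /eqP; rewrite row_mx_eq0 => /andP[/eqP g1 /eqP gN1].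
  case=> ->; [move/rowP: g1 | move/rowP: gN1] => /(_ j); rewrite !mxE => gj;
    by rewrite -[RHS]gj; apply: eq_bigr => i _; rewrite mxE mulrA.
have g_vanish x : d < `|x| -> \sum_i g 0 i * reluP m (w i * x - b i) = 0.
  move=> dx; have x_neq0 : x != 0 by apply: contraTneq dx => ->; rewrite normr0 -leNgt.
  rewrite (eq_bigr (fun i => g 0 i * (w i == Num.sg x)%:R * (`|x| - b i) ^+ m)).
    by apply: sum_shift_pow_eq0 => j; apply: gmom; case: sgrP x_neq0; auto.
  by move=> i _; rewrite reluP_sgr ?mulrA // (le_lt_trans (bd i) dx).
have [i0 gi0] := rV_neq0P g_neq0.
have [t [t1 t_le1]] := exists_sup_normalizer gi0.
exists (fun i => t * g 0 i); split => // x dx.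
by under eq_bigr do rewrite -mulrA; rewrite -mulr_sumr g_vanish ?mulr0.
Qed.

Lemma reluP_comb_norm_le m n (w b beta : 'I_n -> R) (d x : R) :
  (forall i, `|beta i| <= 1) -> (forall i, `|w i| = 1) -> (forall i, `|b i| <= d) ->
  `|x| <= d -> `|\sum_i beta i * reluP m (w i * x - b i)| <= n%:R * (2 * d) ^+ m.
Proof.
move=> beta_le1 w1 bd xd; have d_ge0 : 0 <= d := le_trans (normr_ge0 x) xd.
apply: le_trans (ler_norm_sum _ _ _) _.
rewrite mulr_natl -[n in _ *+ n]card_ord -sumr_const; apply: ler_sum => i _.
rewrite normrM (ger0_norm (reluP_ge0 _ _)) -[X in _ <= X]mul1r.
apply: ler_pM; [exact: normr_ge0 | exact: reluP_ge0 | exact: beta_le1 |].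
apply: le_trans (reluP_le_norm _ _) _; apply: lerXn2r; rewrite ?nnegrE ?normr_ge0 //.
  by rewrite mulr_ge0.
by rewrite (le_trans (ler_normB _ _)) // normrM w1 mul1r; move: (bd i); lra.
Qed.

End TruncatedPower.

Section QuasiUniformBiases.
Variable R : realFieldType.

Lemma quasi_uniform_first_le N (b0 : R) : (2 <= N)%N ->
  `|b0 - (-1 + 2 * 0%:R / N%:R)| <= 1 / N%:R -> b0 <= - 2^-1.
Proof.
move=> N_ge2; rewrite mulr0 mul0r addr0 opprK mul1r => /ler_normlW b0_le.
have : N%:R^-1 <= 2^-1 :> R by rewrite lef_pV2 ?posrE ?ltr0n ?ler_nat // (leq_trans _ N_ge2).
by move: b0_le; lra.
Qed.

Lemma quasi_uniform_center_bound N K n (bn : R) : (0 < N)%N ->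
  (N %/ 2 <= n < N %/ 2 + K)%N -> `|bn - (-1 + 2 * n%:R / N%:R)| <= 1 / N%:R ->
  `|bn| <= (2 * K)%:R / N%:R.
Proof.
move=> N_gt0 /andP[n_lo n_hi] err; have N_gt0R : 0 < N%:R :> R by rewrite ltr0n.
have [lo_nat hi_nat] : (N <= 2 * n + 1)%N /\ (2 * n + 2 <= N + 2 * K)%N.
  by have := divn_eq N 2; have := ltn_pmod N (isT : (0 < 2)%N); lia.
have lo : N%:R <= 2 * n%:R + 1 :> R by rewrite -natrM natr1 ler_nat -addn1.
have hi : 2 * n%:R + 2 <= N%:R + 2 * K%:R :> R by rewrite -!natrM -!natrD ler_nat.
have K_ge1 : 1 <= K%:R :> R by rewrite ler1n; lia.
move: err; set t : R := -1 + 2 * n%:R / N%:R => err.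
have tN : t * N%:R = 2 * n%:R - N%:R by rewrite /t mulrDl mulN1r mulfVK ?gt_eqF // addrC.
have errN : `|bn - t| * N%:R <= 1 by rewrite -ler_pdivlMr.
have tN_le : `|t| * N%:R <= 2 * K%:R - 1.
  by rewrite -(gtr0_norm N_gt0R) -normrM tN ler_norml; apply/andP; split; lra.
have bn_le : `|bn| <= `|bn - t| + `|t| by rewrite -[X in `|X|](subrK t) ler_normD.
rewrite ler_pdivlMr // natrM; apply: le_trans (ler_wpM2r (ltW N_gt0R) bn_le) _.
by rewrite mulrDl; lra.
Qed.

End QuasiUniformBiases.

Section Neurons.
Variable R : realType.
Variables p k : nat.
Local Notation m := (p - k)%N.
Local Notation c := (p`!%:R / (p - k)`!%:R : R).
Local Notation K := (m.+1 + m.+1).+1.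

Lemma dsigma_coef_gt0 : 0 < c.
Proof. by rewrite divr_gt0 // ltr0n fact_gt0. Qed.

Definition neuron (w b x : R) : R := w ^+ k * dsigma p k (w * x - b).

Lemma gramE N (w b : 'I_N -> R) :
  gram p k w b = itv_gram (-1) 1 (fun i => neuron (w i) (b i)).
Proof.
by apply/matrixP => i j; rewrite !mxE; apply: eq_Rintegral => x _; rewrite /neuron; ring.
Qed.

Lemma continuous_neuron w b : continuous (neuron w b).
Proof.
apply: continuous_mul; first exact: cst_continuous.
by apply: continuous_mul; [exact: cst_continuous | exact: continuous_reluP_affine].
Qed.

Lemma neuron_sqr w b x : w = 1 \/ w = -1 -> neuron w b x ^+ 2 = (c * reluP m (w * x - b)) ^+ 2.
Proof. by case=> ->; rewrite /neuron /dsigma exprMn exprAC ?sqrrN !expr1n mul1r. Qed.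

Lemma gram_sym N (w b : 'I_N -> R) : (gram p k w b)^T = gram p k w b.
Proof. by rewrite gramE itv_gram_sym. Qed.

Lemma gram_psd N (w b : 'I_N -> R) (u : 'rV_N) : 0 <= (u *m gram p k w b *m u^T) 0 0.
Proof. by rewrite gramE itv_gram_psd // => i; exact: continuous_neuron. Qed.

Lemma gram_eigenvalue_ge N (w b : 'I_N -> R) i : w i = 1 \/ w i = -1 -> b i <= - 2^-1 ->
  exists2 a, eigenvalue (gram p k w b) a & (c / 2 ^+ m) ^+ 2 <= a.
Proof.
move=> w1 b_le; have [a eig_a Gii] := symmetric_eigenvalue_ge_diag i (gram_sym w b).
exists a => //; apply: le_trans Gii; rewrite gramE mxE.
under eq_Rintegral do rewrite -expr2 neuron_sqr //.
have c_gt0 := dsigma_coef_gt0.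
have key x : 2^-1 <= w i * x - b i -> (c / 2 ^+ m) ^+ 2 <= (c * reluP m (w i * x - b i)) ^+ 2.
  move=> hx; rewrite lerXn2r ?nnegrE ?mulr_ge0 ?reluP_ge0 ?invr_ge0 ?exprn_ge0 ?(ltW c_gt0) //.
  by rewrite ler_pM2l // -exprVn reluP_ge // invr_ge0 ler0n hx.
have cont : continuous (fun x => (c * reluP m (w i * x - b i)) ^+ 2).
  by apply/continuous_sqr/continuous_mul; [exact: cst_continuous | exact: continuous_reluP_affine].
rewrite -[X in X <= _]mulr1; case: w1 key cont => -> key cont.
  rewrite -[X in _ * X <= _]subr0.
  apply: Rintegral_itv_ge; [exact: cont | by move=> x; exact: sqr_ge0 | lra | lra | lra
    | exact: sqr_ge0 | by move=> x /andP[x_ge0 _]; apply: key; lra].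
rewrite -[X in _ * X <= _]opprK -[X in _ * X <= _]add0r.
apply: Rintegral_itv_ge; [exact: cont | by move=> x; exact: sqr_ge0 | lra | lra | lra
  | exact: sqr_ge0 | by move=> x /andP[_ x_le0]; apply: key; lra].
Qed.

Lemma exists_neuron_combination N n (w b : 'I_N -> R) (f : 'I_n -> 'I_N) (beta : 'I_n -> R) i1 :
  injective f -> (forall i, w (f i) = 1 \/ w (f i) = -1) -> `|beta i1| = 1 ->
  exists2 u : 'rV_N, 1 <= (u *m u^T) 0 0 & forall x,
    \sum_j u 0 j * neuron (w j) (b j) x = c * \sum_i beta i * reluP m (w (f i) * x - b (f i)).
Proof.
move=> f_inj w1 beta_i1.
have wk2 i : w (f i) ^+ k * w (f i) ^+ k = 1.
  by rewrite -expr2 exprAC; case: (w1 i) => ->; rewrite ?sqrrN !expr1n.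
exists (\row_j \sum_(i | f i == j) beta i * w j ^+ k) => [|x].
  rewrite mxE (bigD1 (f i1)) //= -[1]addr0; apply: lerD; last first.
    by apply: sumr_ge0 => j _; rewrite [_^T _ _]mxE -expr2 sqr_ge0.
  rewrite [_^T _ _]mxE -expr2 mxE (big_pred1 i1) => [|i]; last by rewrite /= (inj_eq f_inj).
  by rewrite exprMn [X in _ * X]expr2 wk2 mulr1 -real_normK ?num_real // beta_i1 expr1n.
rewrite mulr_sumr (partition_big f xpredT) //=; apply: eq_bigr => j _.
rewrite mxE mulr_suml; apply: eq_bigr => i /eqP <-; rewrite /neuron /dsigma.
have W2 := wk2 i; set W := w (f i) ^+ k in W2 *.
by rewrite -[LHS]mulrA (mulrA W W) W2 mul1r mulrCA.
Qed.

Lemma gram_eigenvalue_le N n (w b : 'I_N -> R) (f : 'I_n -> 'I_N) (d : R) :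
  (k < p)%N -> (m.+1 + m.+1 < n)%N -> injective f ->
  (forall i, w (f i) = 1 \/ w (f i) = -1) -> (forall i, `|b (f i)| <= d) ->
  exists2 a, eigenvalue (gram p k w b) a & a <= (c * (n%:R * (2 * d) ^+ m)) ^+ 2 * (2 * d).
Proof.
move=> kp mn f_inj w1 bd; have m_gt0 : (0 < m)%N by rewrite subn_gt0.
have d_ge0 : 0 <= d := le_trans (normr_ge0 _) (bd (Ordinal (leq_ltn_trans (leq0n _) mn))).
have [beta [[i1 beta_i1] beta_le1 vanish]] :=
  @exists_reluP_comb_vanishing _ _ _ (w \o f) (b \o f) _ m_gt0 mn w1 bd.
have [u u_norm uF] := exists_neuron_combination b f_inj w1 beta_i1.
have u_neq0 : u != 0 by apply: contraTneq u_norm => ->; rewrite mul0mx mxE ler10.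
have [a eig_a au] := symmetric_eigenvalue_le_rayleigh (gram_sym w b) u_neq0.
exists a => //; have a_ge0 := psd_eigenvalue_ge0 (gram_psd w b) eig_a.
apply: le_trans (le_trans (ler_peMr a_ge0 u_norm) au) _.
rewrite gramE itv_gram_quad_form; last by move=> j; exact: continuous_neuron.
under eq_Rintegral do rewrite uF.
have c_gt0 := dsigma_coef_gt0.
apply: Rintegral_itv_le => //.
- apply/continuous_sqr/continuous_mul; first exact: cst_continuous.
  apply: continuous_sum => i; apply: continuous_mul; first exact: cst_continuous.
  exact: continuous_reluP_affine.
- by move=> x; exact: sqr_ge0.
- by move=> x dx; rewrite vanish // mulr0 expr0n.
move=> x xd; have bound_ge0 : 0 <= c * (n%:R * (2 * d) ^+ m).
  by apply: mulr_ge0; [exact: ltW | apply/mulr_ge0/exprn_ge0/mulr_ge0].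
rewrite -real_normK ?num_real // lerXn2r ?nnegrE ?normr_ge0 //.
rewrite normrM gtr0_norm // ler_pM2l //; apply: reluP_comb_norm_le => // i.
by case: (w1 i) => ->; rewrite ?normrN normr1.
Qed.

Lemma gram_eigenvalue_le_quasi_uniform N (w b : 'I_N -> R) :
  (k < p)%N -> (2 * K <= N)%N -> (forall i, w i = 1 \/ w i = -1) ->
  (forall i : 'I_N, `|b i - (-1 + 2 * i%:R / N%:R)| <= 1 / N%:R) ->
  exists2 a, eigenvalue (gram p k w b) a &
    a * N%:R ^+ (1 + 2 * m) <= (c * (K%:R * (4 * K)%:R ^+ m)) ^+ 2 * (4 * K)%:R.
Proof.
move=> kp KN w1 err; have N_gt0 : (0 < N)%N by lia.
have halfK : (N %/ 2 + K <= N)%N by lia.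
pose f (i : 'I_K) : 'I_N := widen_ord halfK (rshift (N %/ 2) i).
have f_inj : injective f by move=> i j /(congr1 val) /= /addnI /val_inj.
have f_range i : (N %/ 2 <= f i < N %/ 2 + K)%N by rewrite /= leq_addr ltn_add2l ltn_ord.
have [a eig_a aD] := gram_eigenvalue_le (d := (2 * K)%:R / N%:R) kp (ltnSn _) f_inj
  (fun i => w1 (f i)) (fun i => quasi_uniform_center_bound N_gt0 (f_range i) (err (f i))).
exists a => //; apply: le_trans (ler_wpM2r (exprn_ge0 _ (ler0n _ _)) aD) _.
rewrite le_eqVlt; apply/orP; left; have N_neq0 : N%:R != 0 :> R by rewrite pnatr_eq0 -lt0n.
have -> : 2 * ((2 * K)%:R / N%:R) = (4 * K)%:R / N%:R :> R by rewrite mulrA -natrM mulnA.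
rewrite expr_div_n exprD expr1 [(2 * m)%N]mulnC exprM.
set A := (4 * K)%:R ^+ m; set B := N%:R ^+ m; set Kr := K%:R.
by apply/eqP; field; rewrite pnatr_eq0 -lt0n fact_gt0 N_neq0 /B expf_neq0.
Qed.

End Neurons.

Theorem theorem2 (R : realType) (p k : nat) (hp : (1 <= p)%N) (hk : (k < p)%N)
  (w b : forall N : nat, 'I_N -> R)
  (hw : forall (N : nat) (i : 'I_N), w N i = 1 \/ w N i = -1)
  (hb : forall eps : R, 0 < eps -> exists N0 : nat, forall N : nat, (N0 <= N)%N ->
          forall n : 'I_N, `| b N n - (-1 + 2 * (n%:R) / N%:R) | <= eps / N%:R) :
  exists C : R, 0 < C /\ exists N0 : nat, forall N : nat, (N0 <= N)%N ->
    ((C * N%:R ^+ (1 + 2 * (p - k)))%:E <= cond_number (gram p k (w N) (b N)))%E.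
Proof.
set m := (p - k)%N; set K := (m.+1 + m.+1).+1; set c : R := p`!%:R / m`!%:R.
set L := (c / 2 ^+ m) ^+ 2; set D := (c * (K%:R * (4 * K)%:R ^+ m)) ^+ 2 * (4 * K)%:R.
have c_gt0 : 0 < c := dsigma_coef_gt0 R p k.
have L_gt0 : 0 < L by rewrite exprn_gt0 // divr_gt0 // exprn_gt0.
have D_gt0 : 0 < D by apply/mulr_gt0/ltr0n/exprn_gt0/mulr_gt0/mulr_gt0/exprn_gt0; rewrite ?ltr0n.
exists (L / D); split; first exact: divr_gt0.
have [N0 hN0] := hb 1 ltr01; exists (N0 + 2 * K)%N => N hN.
have errN := hN0 N (leq_trans (leq_addr _ _) hN).
have N_ge2 : (2 <= N)%N by lia.
pose i0 : 'I_N := Ordinal (ltnW N_ge2).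
have [a1 eig1 La1] := @gram_eigenvalue_ge R p k N (w N) (b N) i0 (hw N i0)
  (quasi_uniform_first_le N_ge2 (errN i0)).
have [a2 eig2 a2N] := gram_eigenvalue_le_quasi_uniform hk (leq_trans (leq_addl _ _) hN) (hw N) errN.
apply: (cond_number_ge (gram_psd p k (w N) (b N)) eig1 eig2).
  by apply: mulr_ge0; [exact/ltW/divr_gt0 | exact/exprn_ge0/ler0n].
apply: le_trans La1; rewrite -mulrA (mulrC _ a2) -[X in _ <= X](divfK (lt0r_neq0 D_gt0)).
by rewrite ler_wpM2l // ltW // divr_gt0.
Qed.
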